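(* Let $n\ge1$, $q$ a prime power, $\mathcal{F}$ a covering of $[n]$ with no redundant basic set, and $\phi$ a permutation of $[n]$ that preserves $\mathcal{F}$. Then the map $T_\phi:\mathbb{F}_q^n\to\mathbb{F}_q^n$, $T_\phi(x_1,\dots,x_n)=(x_{\phi(1)},\dots,x_{\phi(n)})$, is a linear isometry of $(\mathbb{F}_q^n,d_{\mathcal{F}})$.
   Context: For a covering $\mathcal{F}$ of $[n]$ (a family of subsets, called basic sets, whose union is $[n]$) and $x\in\mathbb{F}_q^n$, $\mathrm{wt}_{\mathcal{F}}(x)=\min\{|\mathcal{A}|:\mathcal{A}\subset\mathcal{F},\ \mathrm{supp}(x)\subset\bigcup_{A\in\mathcal{A}}A\}$ where $\mathrm{supp}(x)=\{i:x_i\ne0\}$, and $d_{\mathcal{F}}(x,y)=\mathrm{wt}_{\mathcal{F}}(x-y)$. A basic set is redundant if it is properly contained in another basic set. A permutation $\phi$ of $[n]$ preserves $\mathcal{F}$ if $\phi(A)\in\mathcal{F}$ for every $A\in\mathcal{F}$. *)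

From HB Require Import structures.
From mathcomp Require Import all_boot all_order all_algebra all_fingroup all_field.
Set Implicit Arguments. Unset Strict Implicit. Unset Printing Implicit Defensive.
Import GRing.Theory.
Local Open Scope ring_scope.

Definition is_covering (n : nat) (fam : {set {set 'I_n}}) : Prop :=
  cover fam = [set: 'I_n].

Definition no_redundant (n : nat) (fam : {set {set 'I_n}}) : Prop :=
  forall A B, A \in fam -> B \in fam -> ~~ (A \proper B).

Definition preserves (n : nat) (phi : {perm 'I_n}) (fam : {set {set 'I_n}}) : Prop :=
  forall A, A \in fam -> phi @: A \in fam.

Definition supp (F : fieldType) (n : nat) (x : 'rV[F]_n) : {set 'I_n} :=
  [set i | x 0 i != 0].

(* wt_F(x) = min{|A| : A subset of fam, supp x subset of union of A}.
   For a covering, fam itself is admissible, so the default #|fam| of the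
   minimum is never smaller than the true minimum. *)
Definition cwt (F : fieldType) (n : nat) (fam : {set {set 'I_n}}) (x : 'rV[F]_n) : nat :=
  \big[minn/#|fam|]_(S : {set {set 'I_n}} | (S \subset fam) && (supp x \subset cover S)) #|S|.

Definition cdist (F : fieldType) (n : nat) (fam : {set {set 'I_n}}) (x y : 'rV[F]_n) : nat :=
  cwt fam (x - y).

Definition Tperm (F : fieldType) (n : nat) (phi : {perm 'I_n}) (x : 'rV[F]_n) : 'rV[F]_n :=
  \row_(i < n) x 0 (phi i).

(* T_phi only permutes coordinates, so it is linear and bijective, and it moves
   supports by phi^-1.  Since phi, hence phi^-1, maps basic sets to basic sets,
   the image under phi^-1 of a family of basic sets covering supp x is a family
   of no more basic sets covering supp (T_phi x), and conversely; so the two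
   weights coincide. *)
From HB Require Import structures.
From mathcomp Require Import all_boot all_order all_algebra all_fingroup all_field.
Import Order.TTheory GRing.Theory.
Local Open Scope ring_scope.

Section CoverNumber.

Context {T : finType} (fam : {set {set T}}).

Definition covering_subfam (s : {set T}) : pred {set {set T}} :=
  fun S => (S \subset fam) && (s \subset cover S).

Definition imset_stable (g : T -> T) : Prop :=
  {in fam, forall A : {set T}, g @: A \in fam}.

Definition cover_num (s : {set T}) : nat :=
  \big[minn/#|fam|]_(S | covering_subfam s S) #|S|.

Lemma cover_num_le (s : {set T}) (S : {set {set T}}) :
  S \subset fam -> s \subset cover S -> (cover_num s <= #|S|)%N.
Proof.
move=> Sfam sS.
have := @bigmin_le_cond _ nat _ #|fam| S (covering_subfam s)
  (fun S : {set {set T}} => #|S|).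
by rewrite minEnat /covering_subfam Sfam sS; apply.
Qed.

Lemma cover_num_min (s : {set T}) (m : nat) :
  (m <= #|fam|)%N ->
  (forall S : {set {set T}}, S \subset fam -> s \subset cover S -> m <= #|S|)%N ->
  (m <= cover_num s)%N.
Proof.
move=> m_fam m_S.
have := @le_bigmin _ nat _ (index_enum _) (fun S : {set {set T}} => #|S|)
  #|fam| m (covering_subfam s) m_fam.
by rewrite minEnat; apply=> S /andP[]; exact: m_S.
Qed.

Lemma cover_num_le_card (s : {set T}) : (cover_num s <= #|fam|)%N.
Proof.
have := @bigmin_le_id _ nat _ (index_enum _) #|fam| (covering_subfam s)
  (fun S : {set {set T}} => #|S|).
by rewrite minEnat.
Qed.

Lemma cover_num_imset_le (g : T -> T) (s : {set T}) :
  imset_stable g -> (cover_num (g @: s) <= cover_num s)%N.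
Proof.
move=> g_fam; apply: cover_num_min => [|S Sfam sS].
  exact: cover_num_le_card.
pose gS := (fun A : {set T} => g @: A) @: S.
apply: (@leq_trans #|gS|); last exact: leq_imset_card.
apply: cover_num_le.
  by apply/subsetP=> _ /imsetP[A AS ->]; apply/g_fam/(subsetP Sfam).
apply/subsetP=> _ /imsetP[y /(subsetP sS) /bigcupP[A AS yA] ->].
by apply/bigcupP; exists (g @: A); apply: imset_f.
Qed.

Lemma preserves_invg (g : {perm T}) :
  imset_stable g -> imset_stable (g^-1)%g.
Proof.
move=> g_fam B Bfam.
have g_fam_eq : (fun A : {set T} => g @: A) @: fam = fam.
  apply/eqP; rewrite eqEcard card_imset; last exact/imset_inj/perm_inj.
  by rewrite leqnn andbT; apply/subsetP=> _ /imsetP[A Afam ->]; apply: g_fam.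
move: Bfam; rewrite -{1}g_fam_eq => /imsetP[A Afam ->].
by rewrite -imset_comp (eq_imset _ (permK g)) imset_id.
Qed.

Lemma cover_num_perm (g : {perm T}) (s : {set T}) :
  imset_stable g -> cover_num (g @: s) = cover_num s.
Proof.
move=> g_fam; apply/eqP; rewrite eqn_leq cover_num_imset_le //=.
have {1}-> : s = (g^-1)%g @: (g @: s).
  by rewrite -imset_comp (eq_imset _ (permK g)) imset_id.
by apply: cover_num_imset_le; apply: preserves_invg.
Qed.

End CoverNumber.

Section CoordinatePermutation.

Context {F : fieldType} {n : nat} (phi : {perm 'I_n}).

Lemma Tperm_is_linear : linear (Tperm (F:=F) phi).
Proof. by move=> a u v; apply/rowP=> i; rewrite !mxE. Qed.

Lemma TpermK : cancel (Tperm (F:=F) phi) (Tperm (phi^-1)%g).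
Proof. by move=> x; apply/rowP=> i; rewrite !mxE permKV. Qed.

Lemma TpermKV : cancel (Tperm (F:=F) (phi^-1)%g) (Tperm phi).
Proof. by move=> x; apply/rowP=> i; rewrite !mxE permK. Qed.

Lemma TpermB (x y : 'rV[F]_n) : Tperm phi x - Tperm phi y = Tperm phi (x - y).
Proof. by apply/rowP=> i; rewrite !mxE. Qed.

Lemma supp_Tperm (x : 'rV[F]_n) : supp (Tperm phi x) = (phi^-1)%g @: supp x.
Proof.
apply/setP=> i; rewrite -[i in RHS](permK phi) mem_imset; last exact: perm_inj.
by rewrite !inE mxE.
Qed.

Lemma cwt_Tperm (fam : {set {set 'I_n}}) (x : 'rV[F]_n) :
  preserves phi fam -> cwt fam (Tperm phi x) = cwt fam x.
Proof.
move=> phi_fam; rewrite /cwt -!/(cover_num fam _) supp_Tperm.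
apply: cover_num_perm; apply: preserves_invg; exact: phi_fam.
Qed.

End CoordinatePermutation.

Theorem proposition5 (F : finFieldType) (n : nat) (fam : {set {set 'I_n}})
    (phi : {perm 'I_n}) :
  (0 < n)%N -> is_covering fam -> no_redundant fam -> preserves phi fam ->
  [/\ linear (Tperm (F:=F) phi), bijective (Tperm (F:=F) phi) &
      forall x y : 'rV[F]_n,
        cdist fam (Tperm phi x) (Tperm phi y) = cdist fam x y].
Proof.
move=> _ _ _ phi_fam; split.
- exact: Tperm_is_linear.
- exact: Bijective (TpermK phi) (TpermKV phi).
- by move=> x y; rewrite /cdist TpermB cwt_Tperm.
Qed.
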